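(* Suppose $a$ and $b$ are integers with $a\le p-1$ and $b\le q-1$, and $s$ is an element of $S$ (or of $R$) which is homogeneous modulo $\vec c$ of degree $a\vec x+b\vec y \bmod \vec c$ (i.e.\ all its monomials have degree congruent to $a\vec x+b\vec y$ in $L/\mathbb{Z}\vec c$). Then: (i) $s$ lies in the ideal $(x^a,y^{q-1+b})\cap(x^{p-1+a},y^b)$; (ii) if $a\le p-2$ then $s$ also lies in $(x^a,y^{q+b})$; (iii) if $b\le q-2$ then $s$ also lies in $(x^{p+a},y^b)$.
   Context: Let $p,q\ge2$ be integers and $W=x^py+xy^q$. Let $L$ be the abelian group generated by $\vec x,\vec y,\vec c$ modulo $p\vec x+\vec y=\vec x+q\vec y=\vec c$; let $S=\mathbb{C}[x,y]$ be $L$-graded with $\deg x=\vec x$, $\deg y=\vec y$, and $R=S/(W)$. *)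

From mathcomp Require Import all_boot all_algebra.
From mathcomp Require Import reals.
From mathcomp Require Import complex.
From mathcomp Require Export mpoly.
Set Implicit Arguments. Unset Strict Implicit. Unset Printing Implicit Defensive.
Import GRing.Theory Num.Theory.
Local Open Scope ring_scope.

(* The complex numbers: C = R[i] for a (the) complete archimedean real field R. *)
(* S = C[x,y] is {mpoly R[i][2]}, with x = 'X_0 and y = 'X_1. *)
Definition xvar (K : comNzRingType) : {mpoly K[2]} := 'X_(0 : 'I_2).
Definition yvar (K : comNzRingType) : {mpoly K[2]} := 'X_(1 : 'I_2).

(* Power with an integer exponent in the ideal-generator sense:
   t^e for e <= 0 is taken to be 1 (the generator of the unit ideal). *)
Definition ipow (K : comNzRingType) (t : {mpoly K[2]}) (e : int) : {mpoly K[2]} :=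
  match e with Posz n => t ^+ n | Negz _ => 1 end.

Definition in_ideal2 (K : comNzRingType) (f g s : {mpoly K[2]}) : Prop :=
  exists u v : {mpoly K[2]}, s = u * f + v * g.

(* The group L: elements u x + v y + w c, represented by (u,v,w) in Z^3, modulo
   the relations p x + y - c = 0 and x + q y - c = 0.  Two elements of L are
   equal in L / Z c iff their difference lies in the subgroup spanned by
   (p,1,-1), (1,q,-1) and (0,0,1). *)
Definition eq_L_mod_c (p q : nat) (u v w u' v' w' : int) : Prop :=
  exists k l m : int,
    [/\ u - u' = k * p%:Z + l,
        v - v' = k + l * q%:Z
      & w - w' = - k - l + m].

(* deg(x^i y^j) = i x + j y. s is homogeneous modulo c of degree a x + b y:
   every monomial of s has degree congruent to a x + b y in L / Z c. *)
Definition homog_mod_c (K : comNzRingType) (p q : nat) (a b : int)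
    (s : {mpoly K[2]}) : Prop :=
  forall m : 'X_{1..2}, m \in msupp s ->
    eq_L_mod_c p q (m (0 : 'I_2))%:Z (m (1 : 'I_2))%:Z 0 a b 0.

(* Write a monomial of s as x^i y^j.  Homogeneity modulo c means
   (i - a, j - b) = k (p, 1) + l (1, q) for some integers k, l, and a sign
   analysis on l shows that such a lattice point with i, j >= 0 cannot have
   both i < a and j < q - 1 + b (or j < q + b when a <= p - 2).  Hence every
   monomial of s is divisible by one of the two generators, and by the
   symmetry x <-> y, p <-> q, a <-> b the same holds for the other ideals. *)
From mathcomp Require Import all_boot all_order all_algebra.
From mathcomp Require Import reals.
From mathcomp Require Import complex.
From mathcomp Require Import mpoly.
From mathcomp Require Import zify.
Set Implicit Arguments.
Unset Strict Implicit.
Unset Printing Implicit Defensive.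

Import Order.TTheory GRing.Theory Num.Theory.
Local Open Scope ring_scope.

Lemma exponent_dichotomy (p q a b d i j k l : int) :
  0 < p -> 0 < q -> 0 <= d -> a + d < p -> b < q -> 0 <= i -> 0 <= j ->
  i - a = k * p + l -> j - b = k + l * q -> a <= i \/ q - 1 + d + b <= j.
Proof.
move=> p_gt0 q_gt0 d_ge0 ad_lt_p b_lt_q i_ge0 j_ge0 Ei Ej.
have [a_le_i|i_lt_a] := lerP a i; [by left|right].
case: (ltrgtP l 0) => [l_lt0|l_gt0|l0].
- have k_ge1 : 1 <= k by nia.
  have k_ge : 1 + k * p * q <= k by nia.
  have : 0 <= k * (p * q - 1) by nia.
  nia.
- have k_lt0 : k < 0 by nia.
  have l_ge : d + 1 - p - k * p <= l by lia.
  have := mulr_ge0 (ltW q_gt0) (etrans (subr_ge0 _ _) l_ge).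
  (* together with j < q - 1 + d + b this gives (-k-1)(pq-1) + d(q-1) + 1 <= 0 *)
  have : 0 <= (- k - 1) * (q * p - 1) by nia.
  have : 0 <= d * (q - 1) by nia.
  nia.
- rewrite l0 addr0 in Ei.
  have k_lt0 : k < 0 by nia.
  have : 0 <= (- k - 1) * p by nia.
  nia.
Qed.

Section MonomialIdeals.
Variable K : comNzRingType.
Implicit Types (f g s t : {mpoly K[2]}) (e : int).

Lemma expr_ipow_factor t e (n : nat) :
  e <= n%:Z -> exists w, t ^+ n = w * ipow t e.
Proof.
case: e => [k|k] /= e_le_n.
- by exists (t ^+ (n - k)); rewrite -exprD subnK //; lia.
- by exists (t ^+ n); rewrite mulr1.
Qed.

Lemma mpolyX2E (m : 'X_{1..2}) :
  'X_[m] = xvar K ^+ m (0 : 'I_2) * yvar K ^+ m (1 : 'I_2).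
Proof.
rewrite mpolyXE_id !big_ord_recl big_ord0 mulr1 /xvar /yvar.
by congr (_ ^+ _ * _ ^+ _); congr (_ _); apply/val_inj.
Qed.

Lemma in_ideal2_0 f g : in_ideal2 f g 0.
Proof. by exists 0, 0; rewrite !mul0r addr0. Qed.

Lemma in_ideal2D f g s t :
  in_ideal2 f g s -> in_ideal2 f g t -> in_ideal2 f g (s + t).
Proof.
move=> [u [v ->]] [u' [v' ->]]; exists (u + u'), (v + v').
by rewrite !mulrDl addrACA.
Qed.

Lemma in_ideal2_monomial (e1 e2 : int) (c : K) (m : 'X_{1..2}) :
  e1 <= (m (0 : 'I_2))%:Z \/ e2 <= (m (1 : 'I_2))%:Z ->
  in_ideal2 (ipow (xvar K) e1) (ipow (yvar K) e2) (c *: 'X_[m]).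
Proof.
rewrite mpolyX2E => -[/(expr_ipow_factor (xvar K)) [w ->]|].
- exists (c *: (w * yvar K ^+ m (1 : 'I_2))), 0.
  by rewrite mul0r addr0 -!scalerAl mulrAC.
- move=> /(expr_ipow_factor (yvar K)) [w ->].
  exists 0, (c *: (xvar K ^+ m (0 : 'I_2) * w)).
  by rewrite mul0r add0r -!scalerAl mulrA.
Qed.

Lemma in_ideal2_msupp (e1 e2 : int) s :
  (forall m, m \in msupp s -> e1 <= (m (0 : 'I_2))%:Z \/ e2 <= (m (1 : 'I_2))%:Z) ->
  in_ideal2 (ipow (xvar K) e1) (ipow (yvar K) e2) s.
Proof.
move=> Hsupp; rewrite (mpolyE s) big_seq.
apply: (big_ind (in_ideal2 _ _)); [exact: in_ideal2_0 | exact: in_ideal2D |].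
by move=> m /Hsupp; apply: in_ideal2_monomial.
Qed.

Lemma homog_mod_c_exponents (p q : nat) a b s (m : 'X_{1..2}) :
  homog_mod_c p q a b s -> m \in msupp s -> exists k l : int,
    (m (0 : 'I_2))%:Z - a = k * p%:Z + l /\ (m (1 : 'I_2))%:Z - b = k + l * q%:Z.
Proof. by move=> homog_s /homog_s [k [l [_ [Ei Ej _]]]]; exists k, l. Qed.

Variables (p q : nat) (a b d : int).
Hypotheses (p_gt0 : (0 < p)%N) (q_gt0 : (0 < q)%N) (d_ge0 : 0 <= d).

Lemma homog_mod_c_in_ideal2_x s :
  a + d < p%:Z -> b < q%:Z -> homog_mod_c p q a b s ->
  in_ideal2 (ipow (xvar K) a) (ipow (yvar K) (q%:Z - 1 + d + b)) s.
Proof.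
move=> ad_lt_p b_lt_q homog_s; apply: in_ideal2_msupp => m.
move=> /(homog_mod_c_exponents homog_s) [k [l [Ei Ej]]].
by apply: (exponent_dichotomy _ _ d_ge0 ad_lt_p b_lt_q _ _ Ei Ej); lia.
Qed.

Lemma homog_mod_c_in_ideal2_y s :
  a < p%:Z -> b + d < q%:Z -> homog_mod_c p q a b s ->
  in_ideal2 (ipow (xvar K) (p%:Z - 1 + d + a)) (ipow (yvar K) b) s.
Proof.
move=> a_lt_p bd_lt_q homog_s; apply: in_ideal2_msupp => m.
move=> /(homog_mod_c_exponents homog_s) [k [l [Ei Ej]]].
have Ej' : (m (1 : 'I_2))%:Z - b = l * q%:Z + k by rewrite Ej addrC.
have Ei' : (m (0 : 'I_2))%:Z - a = l + k * p%:Z by rewrite Ei addrC.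
have [] := exponent_dichotomy _ _ d_ge0 bd_lt_q a_lt_p _ _ Ej' Ei'; lia.
Qed.

End MonomialIdeals.

Theorem lemma2p2 (R : realType) (p q : nat) (a b : int)
    (s : {mpoly R[i][2]}) :
  (2 <= p)%N -> (2 <= q)%N ->
  a <= p%:Z - 1 -> b <= q%:Z - 1 ->
  homog_mod_c p q a b s ->
  [/\ in_ideal2 (ipow (xvar _) a) (ipow (yvar _) (q%:Z - 1 + b)) s
      /\ in_ideal2 (ipow (xvar _) (p%:Z - 1 + a)) (ipow (yvar _) b) s,
      a <= p%:Z - 2 -> in_ideal2 (ipow (xvar _) a) (ipow (yvar _) (q%:Z + b)) s
    & b <= q%:Z - 2 -> in_ideal2 (ipow (xvar _) (p%:Z + a)) (ipow (yvar _) b) s].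
Proof.
move=> p_ge2 q_ge2 a_le b_le homog_s.
have p_gt0 : (0 < p)%N by lia.
have q_gt0 : (0 < q)%N by lia.
have [a_lt_p b_lt_q] : a < p%:Z /\ b < q%:Z by lia.
have ideal_x (d : int) (d_ge0 : 0 <= d) (ad_lt_p : a + d < p%:Z) :=
  homog_mod_c_in_ideal2_x p_gt0 q_gt0 d_ge0 ad_lt_p b_lt_q homog_s.
have ideal_y (d : int) (d_ge0 : 0 <= d) (bd_lt_q : b + d < q%:Z) :=
  homog_mod_c_in_ideal2_y p_gt0 q_gt0 d_ge0 a_lt_p bd_lt_q homog_s.
split; first split.
- by have := ideal_x 0 (lexx 0); rewrite !addr0; apply.
- by have := ideal_y 0 (lexx 0); rewrite !addr0; apply.
- by move=> a_le_p2; have := ideal_x 1 ler01; rewrite subrK; apply; lia.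
- by move=> b_le_q2; have := ideal_y 1 ler01; rewrite subrK; apply; lia.
Qed.
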